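(* Let $c$ be the ellipse $x^2/a_c^2+y^2/b_c^2=1$, $a_c>b_c>0$, and $e$ the confocal ellipse with semiaxes $a_e=\sqrt{a_c^2+k_e}$, $b_e=\sqrt{b_c^2+k_e}$, $k_e>0$. Put $\mathbf t_c(t)=(-a_c\sin t,\,b_c\cos t)$ and $k_h(t)=-\Vert\mathbf t_c(t)\Vert^2$. Let $P_1P_2\dots$ be a billiard in $e$ with caustic $c$, where $P_i=(a_e\cos t_i,\,b_e\sin t_i)$ and $Q_i=(a_c\cos t_i',\,b_c\sin t_i')$ is the point of contact of the side $P_iP_{i+1}$ with $c$. Then \[r_i:=\overline{Q_{i-1}P_i}=\frac{\Vert\mathbf t_c(t_{i-1}')\Vert\,\Vert\mathbf t_c(t_i)\Vert\sqrt{k_e}}{a_cb_c},\qquad l_i:=\overline{P_iQ_i}=\frac{\Vert\mathbf t_c(t_i)\Vert\,\Vert\mathbf t_c(t_i')\Vert\sqrt{k_e}}{a_cb_c}.\] Moreover, the canonical motion of the billiard induces for the side $P_iP_{i+1}$ the instant angular velocity \[\omega_i=\frac{a_cb_c}{\Vert\mathbf t_c(t_i')\Vert}=\frac{a_cb_c}{\sqrt{-k_h(t_i')}}.\]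
   Context: A billiard in $e$ with caustic $c$ is a sequence of points $P_1,P_2,\dots$ on $e$ such that each line $P_iP_{i+1}$ is tangent to $c$ and $P_{i-1}P_i$, $P_iP_{i+1}$ are the two tangents from $P_i$ to $c$; it is traversed counterclockwise. The canonical billiard motion is the motion of the billiard (all vertices staying on $e$ and all sides tangent to $c$) parametrized by a parameter $u$ such that every vertex $P=(a_e\cos t,b_e\sin t)$ moves with $\frac{dt}{du}=\Vert\mathbf t_c(t)\Vert=\sqrt{a_c^2\sin^2t+b_c^2\cos^2t}$, i.e. with velocity vector $\Vert\mathbf t_c(t)\Vert(-a_e\sin t,\,b_e\cos t)$; angular velocities are derivatives with respect to $u$. *)

From Stdlib Require Import Reals.
From Coquelicot Require Import Coquelicot.
Open Scope R_scope.

Definition pt2 := (R * R)%type.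
Definition vsub (P Q : pt2) : pt2 := (fst P - fst Q, snd P - snd Q).
Definition cross (u v : pt2) : R := fst u * snd v - snd u * fst v.
Definition dist2 (P Q : pt2) : R :=
  sqrt ((fst P - fst Q)^2 + (snd P - snd Q)^2).

Definition ell_pt (a b t : R) : pt2 := (a * cos t, b * sin t).

Definition a_e (ac ke : R) : R := sqrt (ac^2 + ke).
Definition b_e (bc ke : R) : R := sqrt (bc^2 + ke).

Definition t_c (ac bc t : R) : pt2 := (- ac * sin t, bc * cos t).
Definition norm_tc (ac bc t : R) : R :=
  sqrt (ac^2 * (sin t)^2 + bc^2 * (cos t)^2).
Definition k_h (ac bc t : R) : R := - (norm_tc ac bc t)^2.

Definition P_pt (ac bc ke t : R) : pt2 := ell_pt (a_e ac ke) (b_e bc ke) t.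
Definition Q_pt (ac bc t' : R) : pt2 := ell_pt ac bc t'.

(* A billiard in e with caustic c, traversed counterclockwise, given by the
   vertex parameters t : nat -> R (P_0, P_1, ...) and the parameters t' of
   the contact points Q_i of the sides P_i P_{i+1} with c:
   - the line P_i P_{i+1} is tangent to c at Q_i (both P_i and P_{i+1} lie
     on the tangent line of c at Q_i, and P_i <> P_{i+1});
   - P_i P_{i+1} and P_{i+1} P_{i+2} are the two (distinct) tangents from
     P_{i+1} to c, i.e. their contact points differ;
   - counterclockwise traversal: cross(P_i, P_{i+1}) > 0 (the polygon turns
     positively around the common centre). *)
Definition is_billiard (ac bc ke : R) (t t' : nat -> R) : Prop :=
  forall i : nat,
    cross (vsub (P_pt ac bc ke (t i)) (Q_pt ac bc (t' i))) (t_c ac bc (t' i)) = 0 /\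
    cross (vsub (P_pt ac bc ke (t (S i))) (Q_pt ac bc (t' i))) (t_c ac bc (t' i)) = 0 /\
    Q_pt ac bc (t' (S i)) <> Q_pt ac bc (t' i) /\
    cross (P_pt ac bc ke (t i)) (P_pt ac bc ke (t (S i))) > 0.

(* Canonical billiard motion on the open parameter interval ]alpha, beta[:
   T u, T' u are the vertex / contact parameters of the billiard at time u,
   and every vertex moves with dt/du = ||t_c(t)||. *)
Definition canonical_motion (ac bc ke : R) (T T' : R -> nat -> R)
    (alpha beta : R) : Prop :=
  forall u, alpha < u < beta ->
    is_billiard ac bc ke (T u) (T' u) /\
    forall i : nat, is_derive (fun v => T v i) u (norm_tc ac bc (T u i)).

(* Instant angular velocity (w.r.t. u) of a moving line with direction vector
   d(u) = (dx u, dy u): the derivative of its direction angle, i.e.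
   (d x d') / |d|^2. *)
Definition ang_vel (dx dy : R -> R) (u : R) : R :=
  (dx u * Derive dy u - dy u * Derive dx u) / (dx u ^ 2 + dy u ^ 2).

Definition side_ang_vel (ac bc ke : R) (T : R -> nat -> R) (i : nat) (u : R) : R :=
  ang_vel (fun v => fst (vsub (P_pt ac bc ke (T v (S i))) (P_pt ac bc ke (T v i))))
          (fun v => snd (vsub (P_pt ac bc ke (T v (S i))) (P_pt ac bc ke (T v i))))
          u.

From Stdlib Require Import Reals Lra Lia.
From Coquelicot Require Import Coquelicot.
Open Scope R_scope.

(* Write a vertex P = P(t) on e lying on the tangent of c at Q = Q(t') as
   P = Q + λ t_c(t').  As P lies on the polar line of Q, the Lagrange identity
   (u.v)^2 + (u x v)^2 = |u|^2 |v|^2 gives (λ a_c b_c)^2 = k_e ||t_c(t)||^2, hence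
   |PQ| = |λ| ||t_c(t')||.  Likewise the cross product X of t_c(t') with the
   tangent of e at P satisfies X^2 = k_e ||t_c(t')||^2.  Up to a positive
   factor X is the derivative, along the tangent line, of the equation of e at
   its root λ; as Q lies inside e, X has the sign of λ, so
   ||t_c(t)|| X = λ a_c b_c ||t_c(t')||.  Under the canonical motion the side
   P_i P_(i+1) = (λ_(i+1) - λ_i) t_c(t'_i) thus has a derivative whose cross
   product with t_c(t'_i) is (λ_(i+1) - λ_i) a_c b_c ||t_c(t'_i)||, and its
   direction turns at the rate a_c b_c / ||t_c(t'_i)||. *)

Definition vscale (k : R) (v : pt2) : pt2 := (k * fst v, k * snd v).
Definition norm2 (v : pt2) : R := fst v ^ 2 + snd v ^ 2.

Lemma cross_vscale_l (k : R) (v w : pt2) : cross (vscale k v) w = k * cross v w.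
Proof. unfold cross, vscale; simpl; ring. Qed.

Lemma cross_vscale_r (k : R) (v w : pt2) : cross v (vscale k w) = k * cross v w.
Proof. unfold cross, vscale; simpl; ring. Qed.

Lemma cross_vsub_r (u v w : pt2) : cross u (vsub v w) = cross u v - cross u w.
Proof. unfold cross, vsub; simpl; ring. Qed.

Lemma vsub_vsub_common (v w o : pt2) : vsub v w = vsub (vsub v o) (vsub w o).
Proof. unfold vsub; simpl; f_equal; ring. Qed.

Lemma vsub_vscale (k l : R) (v : pt2) : vsub (vscale k v) (vscale l v) = vscale (k - l) v.
Proof. unfold vsub, vscale; simpl; f_equal; ring. Qed.

Lemma norm2_vscale (k : R) (v : pt2) : norm2 (vscale k v) = k ^ 2 * norm2 v.
Proof. unfold norm2, vscale; simpl; ring. Qed.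

Lemma pow2_eq_same_sign (x y : R) : x ^ 2 = y ^ 2 -> 0 <= x * y -> x = y.
Proof.
intros Hsq Hxy.
assert (Hfac : (x - y) * (x + y) = 0) by (rewrite <- (Rminus_diag_eq _ _ Hsq); ring).
destruct (Rmult_integral _ _ Hfac) as [Hd | Hs]; [lra | nra].
Qed.

Lemma cos_sin_sq (x : R) : cos x ^ 2 + sin x ^ 2 = 1.
Proof. rewrite <- (sin2_cos2 x); unfold Rsqr; ring. Qed.

Lemma a_e_pos (ac ke : R) : 0 < ke -> 0 < a_e ac ke.
Proof. intro Hke; apply sqrt_lt_R0; nra. Qed.

Lemma a_e_sq (ac ke : R) : 0 <= ke -> a_e ac ke ^ 2 = ac ^ 2 + ke.
Proof. intro Hke; apply pow2_sqrt; nra. Qed.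

Lemma b_e_pos (bc ke : R) : 0 < ke -> 0 < b_e bc ke.
Proof. intro Hke; apply sqrt_lt_R0; nra. Qed.

Lemma b_e_sq (bc ke : R) : 0 <= ke -> b_e bc ke ^ 2 = bc ^ 2 + ke.
Proof. intro Hke; apply pow2_sqrt; nra. Qed.

Lemma norm_tc_sq (a b t : R) : norm_tc a b t ^ 2 = a ^ 2 * sin t ^ 2 + b ^ 2 * cos t ^ 2.
Proof. apply pow2_sqrt; nra. Qed.

Lemma norm_tc_pos (a b t : R) : 0 < a -> 0 < b -> 0 < norm_tc a b t.
Proof.
intros Ha Hb; apply sqrt_lt_R0.
pose proof (cos_sin_sq t) as Hcs.
assert (0 <= cos t ^ 2) by apply pow2_ge_0; assert (0 <= sin t ^ 2) by apply pow2_ge_0.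
destruct (Rle_lt_dec (sin t ^ 2) (1 / 2)); nra.
Qed.

Lemma norm2_t_c (a b t : R) : norm2 (t_c a b t) = norm_tc a b t ^ 2.
Proof. rewrite norm_tc_sq; unfold norm2, t_c; simpl; ring. Qed.

Lemma sqrt_opp_k_h (a b t : R) : sqrt (- k_h a b t) = norm_tc a b t.
Proof. unfold k_h; rewrite Ropp_involutive; apply sqrt_pow2, sqrt_pos. Qed.

Lemma dist2_sym (P Q : pt2) : dist2 P Q = dist2 Q P.
Proof. unfold dist2; f_equal; ring. Qed.

Lemma dist2_norm2 (P Q : pt2) : dist2 P Q = sqrt (norm2 (vsub P Q)).
Proof. reflexivity. Qed.

(* λ = (cos t', sin t') x (a_e cos t / a_c, b_e sin t / b_c): after scaling the
   axes by 1/a_c and 1/b_c, c is the unit circle and λ is the signed offset of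
   P(t) from Q(t') along the tangent. *)
Definition tangent_param (ac bc ke t t' : R) : R :=
  (ac * b_e bc ke * sin t * cos t' - bc * a_e ac ke * cos t * sin t') / (ac * bc).

Section TangentSegment.

Variables ac bc ke t t' : R.
Hypotheses (Hac : 0 < ac) (Hbc : 0 < bc) (Hke : 0 < ke).
Hypothesis Htangent : cross (vsub (P_pt ac bc ke t) (Q_pt ac bc t')) (t_c ac bc t') = 0.

Local Notation ae := (a_e ac ke).
Local Notation be := (b_e bc ke).
Local Notation lambda := (tangent_param ac bc ke t t').

Lemma tangent_polar : ae * bc * cos t * cos t' + ac * be * sin t * sin t' = ac * bc.
Proof.
revert Htangent; unfold cross, vsub, P_pt, Q_pt, ell_pt, t_c; simpl; intro Htan.
transitivity (ac * bc * (cos t' ^ 2 + sin t' ^ 2)); [lra | rewrite cos_sin_sq; ring].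
Qed.

Lemma P_sub_Q_tangent : vsub (P_pt ac bc ke t) (Q_pt ac bc t') = vscale lambda (t_c ac bc t').
Proof.
pose proof tangent_polar as Hpolar; pose proof (cos_sin_sq t') as Hc'.
unfold vsub, vscale, P_pt, Q_pt, ell_pt, t_c, tangent_param; simpl; f_equal.
- transitivity ((ae * cos t * (cos t' ^ 2 + sin t' ^ 2) * bc
                 - cos t' * (ae * bc * cos t * cos t' + ac * be * sin t * sin t')) / bc).
  + rewrite Hc', Hpolar; field; lra.
  + field; lra.
- transitivity ((be * sin t * (cos t' ^ 2 + sin t' ^ 2) * ac
                 - sin t' * (ae * bc * cos t * cos t' + ac * be * sin t * sin t')) / ac).
  + rewrite Hc', Hpolar; field; lra.
  + field; lra.
Qed.

Lemma tangent_param_sq : (lambda * (ac * bc)) ^ 2 = ke * norm_tc ac bc t ^ 2.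
Proof.
pose proof tangent_polar as Hpolar.
rewrite norm_tc_sq.
(* Lagrange's identity for (bc ae cos t, ac be sin t) and (cos t', sin t'). *)
transitivity ((bc ^ 2 * ae ^ 2 * cos t ^ 2 + ac ^ 2 * be ^ 2 * sin t ^ 2) * (cos t' ^ 2 + sin t' ^ 2)
              - (ae * bc * cos t * cos t' + ac * be * sin t * sin t') ^ 2).
- unfold tangent_param; field; lra.
- rewrite cos_sin_sq, Hpolar, a_e_sq, b_e_sq by lra.
  transitivity (ac ^ 2 * bc ^ 2 * (cos t ^ 2 + sin t ^ 2 - 1)
                + ke * (ac ^ 2 * sin t ^ 2 + bc ^ 2 * cos t ^ 2)); [ring |].
  rewrite cos_sin_sq; ring.
Qed.

Lemma cross_t_c_sq :
  cross (t_c ac bc t') (t_c ae be t) ^ 2 = ke * norm_tc ac bc t' ^ 2.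
Proof.
pose proof tangent_polar as Hpolar.
rewrite norm_tc_sq.
transitivity ((bc ^ 2 * ae ^ 2 * cos t' ^ 2 + ac ^ 2 * be ^ 2 * sin t' ^ 2) * (cos t ^ 2 + sin t ^ 2)
              - (ae * bc * cos t * cos t' + ac * be * sin t * sin t') ^ 2).
- unfold cross, t_c; simpl; ring.
- rewrite cos_sin_sq, Hpolar, a_e_sq, b_e_sq by lra.
  transitivity (ac ^ 2 * bc ^ 2 * (cos t' ^ 2 + sin t' ^ 2 - 1)
                + ke * (ac ^ 2 * sin t' ^ 2 + bc ^ 2 * cos t' ^ 2)); [ring |].
  rewrite cos_sin_sq; ring.
Qed.

Lemma cross_t_c_tangent_param_nonneg : 0 <= cross (t_c ac bc t') (t_c ae be t) * lambda.
Proof.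
assert (Hx : ae * cos t = ac * cos t' - lambda * ac * sin t').
{ pose proof (f_equal fst P_sub_Q_tangent) as H; simpl in H; lra. }
assert (Hy : be * sin t = bc * sin t' + lambda * bc * cos t').
{ pose proof (f_equal snd P_sub_Q_tangent) as H; simpl in H; lra. }
assert (Hon_e : be ^ 2 * (ae * cos t) ^ 2 + ae ^ 2 * (be * sin t) ^ 2 = ae ^ 2 * be ^ 2).
{ transitivity (ae ^ 2 * be ^ 2 * (cos t ^ 2 + sin t ^ 2)); [ring | rewrite cos_sin_sq; ring]. }
rewrite Hx, Hy in Hon_e.
(* On the tangent line, e reads F(λ) = A λ^2 + 2 B λ + C = 0 with
   C = - k_e (be^2 cos^2 t' + ae^2 sin^2 t') < 0 (Q is inside e), and
   ae be X = F'(λ) / 2; hence 2 ae be X λ = A λ^2 - C. *)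
set (A := (ac * be * sin t') ^ 2 + (bc * ae * cos t') ^ 2).
assert (Hkey : 2 * (ae * be) * (cross (t_c ac bc t') (t_c ae be t) * lambda)
               = A * lambda ^ 2 + ke * ((be * cos t') ^ 2 + (ae * sin t') ^ 2)).
{ transitivity (2 * lambda * (- ac * sin t' * be ^ 2 * (ae * cos t)
                              + bc * cos t' * ae ^ 2 * (be * sin t)));
    [unfold cross, t_c; simpl; ring |].
  rewrite Hx, Hy.
  transitivity (A * lambda ^ 2
     + (be ^ 2 * (ac * cos t' - lambda * ac * sin t') ^ 2
        + ae ^ 2 * (bc * sin t' + lambda * bc * cos t') ^ 2)
     - ae ^ 2 * be ^ 2 * (cos t' ^ 2 + sin t' ^ 2)
     + be ^ 2 * cos t' ^ 2 * (ae ^ 2 - ac ^ 2) + ae ^ 2 * sin t' ^ 2 * (be ^ 2 - bc ^ 2));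
    [unfold A; ring |].
  assert (Hae : ae ^ 2 - ac ^ 2 = ke) by (rewrite a_e_sq by lra; ring).
  assert (Hbe : be ^ 2 - bc ^ 2 = ke) by (rewrite b_e_sq by lra; ring).
  rewrite Hon_e, cos_sin_sq, Hae, Hbe; unfold A; ring. }
assert (0 < ae * be) by (apply Rmult_lt_0_compat; [apply a_e_pos | apply b_e_pos]; lra).
assert (0 <= A * lambda ^ 2).
{ apply Rmult_le_pos; [unfold A; apply Rplus_le_le_0_compat |]; apply pow2_ge_0. }
assert (0 <= ke * ((be * cos t') ^ 2 + (ae * sin t') ^ 2)).
{ apply Rmult_le_pos; [lra | apply Rplus_le_le_0_compat; apply pow2_ge_0]. }
nra.
Qed.

Lemma norm_tc_cross_t_c :
  norm_tc ac bc t * cross (t_c ac bc t') (t_c ae be t)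
  = lambda * (ac * bc) * norm_tc ac bc t'.
Proof.
apply pow2_eq_same_sign.
- transitivity (norm_tc ac bc t ^ 2 * cross (t_c ac bc t') (t_c ae be t) ^ 2); [ring |].
  transitivity ((lambda * (ac * bc)) ^ 2 * norm_tc ac bc t' ^ 2); [| ring].
  rewrite cross_t_c_sq, tangent_param_sq; ring.
- pose proof cross_t_c_tangent_param_nonneg.
  pose proof (norm_tc_pos ac bc t Hac Hbc); pose proof (norm_tc_pos ac bc t' Hac Hbc).
  replace (_ * _) with (norm_tc ac bc t * norm_tc ac bc t' * (ac * bc)
                        * (cross (t_c ac bc t') (t_c ae be t) * lambda)) by ring.
  apply Rmult_le_pos; [| assumption].
  repeat apply Rmult_le_pos; lra.
Qed.

Lemma dist2_P_Q_tangent :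
  dist2 (P_pt ac bc ke t) (Q_pt ac bc t')
  = norm_tc ac bc t * norm_tc ac bc t' * sqrt ke / (ac * bc).
Proof.
pose proof (norm_tc_pos ac bc t Hac Hbc); pose proof (norm_tc_pos ac bc t' Hac Hbc).
assert (0 < sqrt ke) by (apply sqrt_lt_R0; lra).
rewrite dist2_norm2, P_sub_Q_tangent, norm2_vscale, norm2_t_c.
rewrite <- sqrt_pow2 by (apply Rlt_le, Rdiv_lt_0_compat; [repeat apply Rmult_lt_0_compat | nra]; lra).
f_equal.
transitivity ((lambda * (ac * bc)) ^ 2 * norm_tc ac bc t' ^ 2 / (ac * bc) ^ 2); [field; lra |].
rewrite tangent_param_sq, <- (pow2_sqrt ke) at 1 by lra.
field; lra.
Qed.

End TangentSegment.

Definition vertex_velocity (ac bc ke t : R) : pt2 :=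
  vscale (norm_tc ac bc t) (t_c (a_e ac ke) (b_e bc ke) t).

Lemma is_derive_ell_pt (a b : R) (f : R -> R) (u df : R) :
  is_derive f u df ->
  is_derive (fun v => fst (ell_pt a b (f v))) u (df * fst (t_c a b (f u))) /\
  is_derive (fun v => snd (ell_pt a b (f v))) u (df * snd (t_c a b (f u))).
Proof.
intro Hf; unfold ell_pt, t_c; simpl; split.
- replace (df * (- a * sin (f u))) with (a * (df * - sin (f u))) by ring.
  apply is_derive_scal, (is_derive_comp cos f), Hf; apply is_derive_cos.
- replace (df * (b * cos (f u))) with (b * (df * cos (f u))) by ring.
  apply is_derive_scal, (is_derive_comp sin f), Hf; apply is_derive_sin.
Qed.

Lemma ang_vel_is_derive (dx dy : R -> R) (u dx' dy' : R) :
  is_derive dx u dx' -> is_derive dy u dy' ->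
  ang_vel dx dy u = cross (dx u, dy u) (dx', dy') / norm2 (dx u, dy u).
Proof.
intros Hdx Hdy; unfold ang_vel, cross, norm2; simpl.
rewrite (is_derive_unique _ _ _ Hdx), (is_derive_unique _ _ _ Hdy); reflexivity.
Qed.

Lemma side_ang_vel_vertex_velocity (ac bc ke : R) (T : R -> nat -> R) (i : nat) (u : R) :
  (forall j, is_derive (fun v => T v j) u (norm_tc ac bc (T u j))) ->
  side_ang_vel ac bc ke T i u =
  cross (vsub (P_pt ac bc ke (T u (S i))) (P_pt ac bc ke (T u i)))
        (vsub (vertex_velocity ac bc ke (T u (S i))) (vertex_velocity ac bc ke (T u i)))
  / norm2 (vsub (P_pt ac bc ke (T u (S i))) (P_pt ac bc ke (T u i))).
Proof.
intro Hder.
destruct (is_derive_ell_pt (a_e ac ke) (b_e bc ke) _ u _ (Hder i)) as [Hx1 Hy1].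
destruct (is_derive_ell_pt (a_e ac ke) (b_e bc ke) _ u _ (Hder (S i))) as [Hx2 Hy2].
unfold side_ang_vel; erewrite ang_vel_is_derive; [reflexivity | |].
- apply (is_derive_minus (fun v => fst (P_pt ac bc ke (T v (S i))))
                         (fun v => fst (P_pt ac bc ke (T v i)))); eassumption.
- apply (is_derive_minus (fun v => snd (P_pt ac bc ke (T v (S i))))
                         (fun v => snd (P_pt ac bc ke (T v i)))); eassumption.
Qed.

Lemma side_ang_vel_canonical (ac bc ke : R) (T T' : R -> nat -> R) (alpha beta u : R) (i : nat) :
  0 < ac -> 0 < bc -> 0 < ke ->
  canonical_motion ac bc ke T T' alpha beta -> alpha < u < beta ->
  side_ang_vel ac bc ke T i u = ac * bc / norm_tc ac bc (T' u i).
Proof.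
intros Hac Hbc Hke Hmotion Hu.
destruct (Hmotion u Hu) as [Hbil Hder].
destruct (Hbil i) as (Htan1 & Htan2 & _ & Hccw).
rewrite side_ang_vel_vertex_velocity by exact Hder.
set (t1 := T u i) in *; set (t2 := T u (S i)) in *; set (t' := T' u i) in *.
set (l1 := tangent_param ac bc ke t1 t'); set (l2 := tangent_param ac bc ke t2 t').
assert (Hside : vsub (P_pt ac bc ke t2) (P_pt ac bc ke t1) = vscale (l2 - l1) (t_c ac bc t')).
{ rewrite (vsub_vsub_common _ _ (Q_pt ac bc t')).
  rewrite (P_sub_Q_tangent ac bc ke t1 t'), (P_sub_Q_tangent ac bc ke t2 t') by assumption.
  apply vsub_vscale. }
assert (Hl : l2 - l1 <> 0).
{ intro Hl0.
  assert (Hcross : cross (P_pt ac bc ke t1) (P_pt ac bc ke t2)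
                   = (l2 - l1) * cross (P_pt ac bc ke t1) (t_c ac bc t')).
  { rewrite <- cross_vscale_r, <- Hside; unfold cross, vsub; simpl; ring. }
  rewrite Hl0 in Hcross; lra. }
assert (Hvel : cross (t_c ac bc t')
                 (vsub (vertex_velocity ac bc ke t2) (vertex_velocity ac bc ke t1))
               = (l2 - l1) * (ac * bc) * norm_tc ac bc t').
{ unfold vertex_velocity; rewrite cross_vsub_r, !cross_vscale_r.
  rewrite (norm_tc_cross_t_c ac bc ke t1 t'), (norm_tc_cross_t_c ac bc ke t2 t') by assumption.
  fold l1 l2; ring. }
rewrite Hside, cross_vscale_l, Hvel, norm2_vscale, norm2_t_c.
pose proof (norm_tc_pos ac bc t' Hac Hbc).
field; lra.
Qed.

Theorem lemma1 (ac bc ke : R) (Hab : ac > bc) (Hb : bc > 0) (Hke : ke > 0) :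
  (forall t t' : nat -> R, is_billiard ac bc ke t t' ->
     forall i : nat,
       (* r_i = |Q_{i-1} P_i|  (for i >= 1) *)
       (1 <= i)%nat ->
       dist2 (Q_pt ac bc (t' (i - 1)%nat)) (P_pt ac bc ke (t i)) =
         norm_tc ac bc (t' (i - 1)%nat) * norm_tc ac bc (t i) * sqrt ke / (ac * bc)) /\
  (forall t t' : nat -> R, is_billiard ac bc ke t t' ->
     forall i : nat,
       (* l_i = |P_i Q_i| *)
       dist2 (P_pt ac bc ke (t i)) (Q_pt ac bc (t' i)) =
         norm_tc ac bc (t i) * norm_tc ac bc (t' i) * sqrt ke / (ac * bc)) /\
  (forall (T T' : R -> nat -> R) (alpha beta u : R),
     canonical_motion ac bc ke T T' alpha beta -> alpha < u < beta ->
     forall i : nat,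
       side_ang_vel ac bc ke T i u = ac * bc / norm_tc ac bc (T' u i) /\
       side_ang_vel ac bc ke T i u = ac * bc / sqrt (- k_h ac bc (T' u i))).
Proof.
assert (Hac : 0 < ac) by lra.
split; [| split].
- intros t t' Hbil [| j] Hj; [lia |].
  replace (S j - 1)%nat with j by lia.
  destruct (Hbil j) as (_ & Htan & _).
  rewrite dist2_sym, dist2_P_Q_tangent by assumption.
  unfold Rdiv; ring.
- intros t t' Hbil i.
  destruct (Hbil i) as (Htan & _).
  apply dist2_P_Q_tangent; assumption.
- intros T T' alpha beta u Hmotion Hu i.
  rewrite sqrt_opp_k_h; split; apply (side_ang_vel_canonical _ _ _ _ _ alpha beta); assumption.
Qed.
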